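(* In the maximum-weight online bipartite left-perfect matching problem with general nonnegative weights under vertex arrivals with a hard budget $k=4$ on the number of reassignments per arrival (defined in the context), the most-profitable-augmenting-path algorithm described in the context is $\frac12$-competitive: on every instance, the weight of the final left-perfect matching it outputs is at least $\frac12$ times the maximum weight of a left-perfect matching in $G$.
   Context: Problem: $G=(L\cup R,E)$ is a complete bipartite graph with $|L|\le|R|$ and edge weights $w:E\to\mathbb{Q}_{\ge 0}$ (no triangle inequality is assumed). The algorithm initially knows $R$ (and $k=4$). Over $|L|$ timesteps the vertices of $L$ arrive one at a time, together with all incident edges and their weights. At the end of each timestep the algorithm must output a left-perfect matching of the revealed graph, i.e., a matching in which every arrived vertex of $L$ is matched. The new matching $M_2$ must be obtainable from the previous one $M_1$ (empty before the first timestep) by at most $k$ (re)assignments, the number of (re)assignments being the number of vertices of nonzero degree in $M_1\triangle M_2$; once a vertex is matched it must remain matched afterwards. The weight of a matching is the sum of the weights of its edges. An augmenting path with respect to a matching $M$ is a path between two distinct vertices not covered by $M$ whose edges alternate between non-$M$ and $M$ edges; its profit is the weight of $M\triangle P$ minus the weight of $M$. Algorithm: when a vertex $u$ arrives, among all augmenting paths with respect to the current matching that contain $u$ and have at most $k$ vertices (i.e., length at most $3$), choose one $P$ of maximum profit and output $M\triangle P$. *)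

From HB Require Import structures.
From mathcomp Require Import all_boot all_order all_algebra.
Set Implicit Arguments. Unset Strict Implicit. Unset Printing Implicit Defensive.
Import Order.TTheory GRing.Theory Num.Theory.
Local Open Scope ring_scope.

(* Complete bipartite graph on L (left) and R (right); vertices are L + R,
   the edge {l, r} is represented by the pair (l, r) : L * R.
   A matching is a set of such pairs. *)

Section Online.
Variables (L R : finType).

Definition edge_of (x y : L + R) : option (L * R) :=
  match x, y with
  | inl l, inr r => Some (l, r)
  | inr r, inl l => Some (l, r)
  | _, _ => None
  end.

Definition consec (p : seq (L + R)) : seq ((L + R) * (L + R)) := zip p (behead p).

Definition path_edges (p : seq (L + R)) : seq (L * R) :=
  pmap (fun xy => edge_of xy.1 xy.2) (consec p).

Definition edge_set (p : seq (L + R)) : {set L * R} :=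
  [set e | e \in path_edges p].

Definition symdiff (A B : {set L * R}) : {set L * R} := (A :\: B) :|: (B :\: A).

Definition weight (w : L -> R -> rat) (M : {set L * R}) : rat :=
  \sum_(e in M) w e.1 e.2.

Definition is_matching (M : {set L * R}) : Prop :=
  forall e1 e2, e1 \in M -> e2 \in M -> (e1.1 = e2.1 \/ e1.2 = e2.2) -> e1 = e2.

(* M is a left-perfect matching of the graph revealed when the set A of left
   vertices has arrived (edges are only between A and R). *)
Definition left_perfect (A : {set L}) (M : {set L * R}) : Prop :=
  [/\ is_matching M,
      (forall e, e \in M -> e.1 \in A) &
      (forall l, l \in A -> exists r, (l, r) \in M)].

Definition covered (M : {set L * R}) (v : L + R) : bool :=
  match v with
  | inl l => [exists r, (l, r) \in M]
  | inr r => [exists l, (l, r) \in M]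
  end.

Definition in_revealed (A : {set L}) (v : L + R) : bool :=
  match v with inl l => l \in A | inr _ => true end.

Definition free_endpoints (M : {set L * R}) (p : seq (L + R)) : bool :=
  match p with
  | [::] => false
  | x :: p' => ~~ covered M x && ~~ covered M (last x p')
  end.

Definition augmenting (A : {set L}) (M : {set L * R}) (p : seq (L + R)) : bool :=
  [&& uniq p, 2 <= size p,
      all (in_revealed A) p,
      all (fun xy => edge_of xy.1 xy.2 != None) (consec p),
      sorted (fun e f => (e \in M) != (f \in M)) (path_edges p) &
      free_endpoints M p]%N.

Definition profit (w : L -> R -> rat) (M : {set L * R}) (p : seq (L + R)) : rat :=
  weight w (symdiff M (edge_set p)) - weight w M.

Definition candidate (k : nat) (A : {set L}) (M : {set L * R}) (u : L)
  (p : seq (L + R)) : bool :=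
  [&& augmenting A M p, inl u \in p & size p <= k]%N.

Definition best_path (w : L -> R -> rat) (k : nat) (A : {set L}) (M : {set L * R})
  (u : L) (P : seq (L + R)) : Prop :=
  candidate k A M u P /\
  (forall Q, candidate k A M u Q -> profit w M Q <= profit w M P).

(* alg_run w k A M s Mf : starting from arrived set A and matching M, when the
   vertices of s arrive in order, the algorithm (with any tie-breaking among
   maximum-profit paths) can end with the matching Mf. *)
Fixpoint alg_run (w : L -> R -> rat) (k : nat) (A : {set L}) (M : {set L * R})
  (s : seq L) (Mf : {set L * R}) : Prop :=
  match s with
  | [::] => Mf = M
  | u :: s' => exists P, best_path w k (u |: A) M u P /\
                 alg_run w k (u |: A) (symdiff M (edge_set P)) s' Mf
  end.

End Online.

From HB Require Import structures.
From mathcomp Require Import all_boot all_order all_algebra.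
From mathcomp Require Import lra.
Import Order.TTheory GRing.Theory Num.Theory.
Set Implicit Arguments. Unset Strict Implicit. Unset Printing Implicit Defensive.
Local Open Scope ring_scope.

(* A primal-dual argument.  Keep prices y on the right vertices; when u
   arrives and the algorithm gains g (the profit of its path), charge g to u
   and raise every y r to max (y r) (w u r - g).  Since u is new, its
   candidate paths are u - r with r free and u - r - l - r' with (l, r)
   matched and r' free, and the maximality of g over all of them preserves the
   invariant: y r is at most the weight of the matching edge at r (0 if r is
   free), and at most w l r - w l r' when (l, r) is matched and r' is free.
   At the end w l r <= g l + y r on every edge, the gains sum to w(Mf) and the
   prices to at most w(Mf), so weak duality gives w(Mopt) <= 2 w(Mf). *)

Section Online.
Variables (L R : finType) (w : L -> R -> rat).
Hypothesis w_ge0 : forall l r, 0 <= w l r.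
Implicit Types (A : {set L}) (M : {set L * R}).

Definition unmatched M (r : R) : Prop := forall l, (l, r) \notin M.

Definition left_in A M : Prop := forall e, e \in M -> e.1 \in A.

Definition short_aug M (u : L) (r : R) : {set L * R} := (u, r) |: M.

Definition long_aug M (u l : L) (r r' : R) : {set L * R} :=
  (u, r) |: ((l, r') |: (M :\ (l, r))).

Section Arrival.
Variables (A : {set L}) (M : {set L * R}) (u : L).
Hypotheses (MA : left_in A M) (uA : u \notin A).

Lemma new_edge_notin r : (u, r) \notin M.
Proof. by apply/negP => /MA; apply/negP. Qed.

Lemma new_vertex_uncovered : ~~ covered M (inl u).
Proof. by apply/existsPn => r; exact: new_edge_notin. Qed.

Lemma matched_neq_new l r : (l, r) \in M -> u != l.
Proof. by move=> /MA /= lA; apply: contraNneq uA => ->. Qed.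

Lemma candidate4_shape p : candidate 4 (u |: A) M u p ->
  (exists2 r, unmatched M r & p = [:: inl u; inr r] \/ p = [:: inr r; inl u]) \/
  (exists l r r', [/\ (l, r) \in M, unmatched M r' &
     p = [:: inl u; inr r; inl l; inr r'] \/ p = [:: inr r'; inl l; inr r; inl u]]).
Proof.
rewrite /candidate /augmenting.
case: p => [|x1 [|x2 [|x3 [|x4 [|x5 p]]]]] //=;
  case: x1 => a1; case: x2 => a2 //=; try (case: x3 => a3 //=); try (case: x4 => a4 //=);
  rewrite ?andbF ?andbT ?andFb //= ?inE /=.
- case/andP=> /and3P[_ _ /existsPn F2] /orP[/eqP [] <- | /eqP //].
  by left; exists a2; [exact: F2 | left].
- case/andP=> /and3P[_ /existsPn F1 _] /eqP [] <-.
  by left; exists a1; [exact: F1 | right].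
(* On three vertices one of the two edges is matched, at a free endpoint. *)
- case/andP=> /and5P[_ _ + /existsPn F1 /existsPn F3] _.
  by rewrite (negbTE (F1 a2)) (negbTE (F3 a2)).
- case/andP=> /and5P[_ _ + /existsPn F1 /existsPn F3] _.
  by rewrite (negbTE (F1 a2)) (negbTE (F3 a2)).
(* On four vertices the middle edge is matched, so the uncovered [u] is an end. *)
- case/andP=> /and5P[_ _ /andP[+ +] /existsPn F1 /existsPn F4].
  rewrite (negbTE (F1 a2)) (negbTE (F4 a3)); case M32: ((a3, a2) \in M) => // _ _.
  have u3 := matched_neq_new M32.
  case/or3P => [/eqP [] E | /eqP [] E | /eqP //]; last by rewrite E eqxx in u3.
  by subst a1; right; exists a3, a2, a4; split=> //; left.
- case/andP=> /and5P[_ _ /andP[+ +] /existsPn F1 /existsPn F4].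
  rewrite (negbTE (F1 a2)) (negbTE (F4 a3)); case M23: ((a2, a3) \in M) => // _ _.
  have u2 := matched_neq_new M23.
  case/orP => /eqP [] E; first by rewrite E eqxx in u2.
  by subst a4; right; exists a2, a3, a1; split=> //; right.
Qed.

Lemma candidate_short r : unmatched M r -> candidate 4 (u |: A) M u [:: inl u; inr r].
Proof.
move=> rM; have rM' : ~~ covered M (inr r) by apply/existsPn.
by rewrite /candidate /augmenting /= new_vertex_uncovered rM' !inE /= !eqxx.
Qed.

Lemma candidate_long l r r' : (l, r) \in M -> unmatched M r' ->
  candidate 4 (u |: A) M u [:: inl u; inr r; inl l; inr r'].
Proof.
move=> lrM r'M; have r'M' : ~~ covered M (inr r') by apply/existsPn.
have rr' : (inr r == inr r' :> L + R) = false.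
  by apply/eqP => -[E]; move: (r'M l); rewrite -E lrM.
have ul : (inl u == inl l :> L + R) = false.
  by apply/eqP => -[E]; move: (matched_neq_new lrM); rewrite E eqxx.
rewrite /candidate /augmenting /= new_vertex_uncovered r'M' !inE eqxx /=.
by rewrite ul rr' lrM (negbTE (new_edge_notin r)) (negbTE (r'M l)) (MA lrM) /= !eqxx orbT.
Qed.

Lemma symdiff_short r p : p = [:: inl u; inr r] \/ p = [:: inr r; inl u] ->
  symdiff M (edge_set p) = short_aug M u r.
Proof.
move=> p_eq; have -> : edge_set p = [set (u, r)].
  by case: p_eq => ->; apply/setP => e; rewrite !inE.
apply/setP => e; rewrite /symdiff /short_aug !inE.
by case: eqP => [->|_]; rewrite ?(negbTE (new_edge_notin r)) /= ?andbF ?orbF ?andbT.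
Qed.

Lemma symdiff_long l r r' p : (l, r) \in M -> unmatched M r' ->
  p = [:: inl u; inr r; inl l; inr r'] \/ p = [:: inr r'; inl l; inr r; inl u] ->
  symdiff M (edge_set p) = long_aug M u l r r'.
Proof.
move=> lrM r'M p_eq; have -> : edge_set p = [set (u, r); (l, r); (l, r')].
  by case: p_eq => ->; apply/setP => e; rewrite !inE /=;
    case: (e == (u, r)); case: (e == (l, r)); case: (e == (l, r')).
apply/setP => e; rewrite /symdiff /long_aug !inE.
case: (e =P (u, r)) => [->|_]; first by rewrite (negbTE (new_edge_notin r)).
case: (e =P (l, r)) => [->|_].
  by rewrite lrM; case: eqP => // -[E]; move: (r'M l); rewrite -E lrM.
by case: (e =P (l, r')) => [->|_]; [rewrite (negbTE (r'M l)) | case: (e \in M)].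
Qed.

Lemma weight_short_aug r : weight w (short_aug M u r) = weight w M + w u r.
Proof. by rewrite /weight big_setU1 ?new_edge_notin //= addrC. Qed.

Lemma weight_long_aug l r r' : (l, r) \in M -> unmatched M r' ->
  weight w (long_aug M u l r r') = weight w M + (w u r - w l r + w l r').
Proof.
move=> lrM r'M; rewrite /weight big_setU1 /=; last first.
  rewrite !inE (negbTE (new_edge_notin r)) andbF orbF.
  by apply: contra (matched_neq_new lrM) => /eqP [->].
rewrite big_setU1 /=; last by rewrite !inE negb_and (negbTE (r'M l)) orbT.
rewrite [in RHS](big_setD1 _ lrM) /=; lra.
Qed.

Definition dominates_gains (g : rat) : Prop :=
  (forall r, unmatched M r -> w u r <= g) /\
  (forall l r r', (l, r) \in M -> unmatched M r' -> w u r - w l r + w l r' <= g).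

Lemma best_path_dominates P : best_path w 4 (u |: A) M u P ->
  dominates_gains (profit w M P).
Proof.
case=> _ best; split=> [r rM | l r r' lrM r'M].
  have := best _ (candidate_short rM).
  by rewrite /profit (symdiff_short (or_introl erefl)) weight_short_aug addrAC subrr add0r.
have := best _ (candidate_long lrM r'M).
rewrite /profit (symdiff_long lrM r'M (or_introl erefl)) weight_long_aug //.
by rewrite addrAC subrr add0r.
Qed.

End Arrival.

(* The third clause keeps the first one through a long augmentation, where u
   takes r over from l with gain g = w u r - w l r + w l r', so that
   y r <= w l r - w l r' = w u r - g. *)
Definition dual_inv M (y : R -> rat) : Prop :=
  [/\ forall l r, (l, r) \in M -> y r <= w l r,
      forall r, unmatched M r -> y r <= 0 &
      forall l r r', (l, r) \in M -> unmatched M r' -> y r <= w l r - w l r'].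

Definition raise (y : R -> rat) (u : L) (g : rat) (r : R) : rat := Num.max (y r) (w u r - g).

Lemma dual_inv0 : dual_inv set0 (fun=> 0).
Proof. by split=> [l r | // | l r r']; rewrite inE => /notF []. Qed.

Lemma dual_inv_short M y u r0 g : dual_inv M y -> unmatched M r0 ->
  dominates_gains M u g -> g = w u r0 -> dual_inv (short_aug M u r0) (raise y u g).
Proof.
move=> [le_w le_0 le_swap] r0M [dom_s dom_l] g_eq.
have unmatched_new r : unmatched (short_aug M u r0) r -> unmatched M r.
  by move=> rM l; move: (rM l); rewrite in_setU1 negb_or => /andP[].
split=> [l r | r /unmatched_new rM | l r r'].
- rewrite in_setU1 => /orP[/eqP [-> ->] | lrM]; rewrite ge_max.
    by have := le_0 _ r0M; have := w_ge0 u r0; move=> *; apply/andP; split; lra.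
  have := le_w _ _ lrM; have := dom_l _ _ _ lrM r0M; have := w_ge0 l r0.
  by move=> *; apply/andP; split; lra.
- by rewrite ge_max; have := le_0 _ rM; have := dom_s _ rM; move=> *; apply/andP; split; lra.
- rewrite in_setU1 => /orP[/eqP [-> ->] | lrM] /unmatched_new r'M; rewrite ge_max.
    by have := le_0 _ r0M; have := dom_s _ r'M; move=> *; apply/andP; split; lra.
  have := le_swap _ _ _ lrM r'M; have := dom_l _ _ _ lrM r'M.
  by move=> *; apply/andP; split; lra.
Qed.

Lemma dual_inv_long M y u l0 r0 r1 g : dual_inv M y -> (l0, r0) \in M -> unmatched M r1 ->
  dominates_gains M u g -> g = w u r0 - w l0 r0 + w l0 r1 ->
  dual_inv (long_aug M u l0 r0 r1) (raise y u g).
Proof.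
move=> [le_w le_0 le_swap] l0r0M r1M [dom_s dom_l] g_eq.
have unmatched_new r : unmatched (long_aug M u l0 r0 r1) r -> unmatched M r.
  move=> rM l; apply/negP => lrM.
  have [[_ E] | ne] := eqVneq (l, r) (l0, r0); first by move: (rM u); rewrite E !inE eqxx.
  by move: (rM l); rewrite !inE ne lrM !orbT.
have := dom_s _ r1M; have := w_ge0 u r1 => ? ?.
split=> [l r | r /unmatched_new rM | l r r'].
- rewrite !inE => /or3P[/eqP [-> ->] | /eqP [-> ->] | /andP[_ lrM]]; rewrite ge_max.
  + by have := le_swap _ _ _ l0r0M r1M; move=> *; apply/andP; split; lra.
  + by have := le_0 _ r1M; have := w_ge0 l0 r1; move=> *; apply/andP; split; lra.
  + have := le_w _ _ lrM; have := dom_l _ _ _ lrM r1M; have := w_ge0 l r1.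
    by move=> *; apply/andP; split; lra.
- by rewrite ge_max; have := le_0 _ rM; have := dom_s _ rM; move=> *; apply/andP; split; lra.
- rewrite !inE => /or3P[/eqP [-> ->] | /eqP [-> ->] | /andP[_ lrM]] /unmatched_new r'M;
    rewrite ge_max.
  + have := le_swap _ _ _ l0r0M r1M; have := dom_s _ r'M.
    by move=> *; apply/andP; split; lra.
  + have := le_0 _ r1M; have := dom_l _ _ _ l0r0M r'M.
    by move=> *; apply/andP; split; lra.
  + have := le_swap _ _ _ lrM r'M; have := dom_l _ _ _ lrM r'M.
    by move=> *; apply/andP; split; lra.
Qed.

Lemma best_path_step A M y u P : left_in A M -> u \notin A -> dual_inv M y ->
  best_path w 4 (u |: A) M u P ->
  left_in (u |: A) (symdiff M (edge_set P)) /\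
  dual_inv (symdiff M (edge_set P)) (raise y u (profit w M P)).
Proof.
move=> MA uA yM bestP; have dom := best_path_dominates MA uA bestP.
have [[r0 r0M P_eq] | [l0 [r0 [r1 [l0r0M r1M P_eq]]]]] := candidate4_shape MA uA bestP.1.
  have M'_eq := symdiff_short MA uA P_eq.
  have g_eq : profit w M P = w u r0.
    by rewrite /profit M'_eq (weight_short_aug MA uA) addrC addKr.
  rewrite M'_eq; split; last exact: dual_inv_short.
  by move=> e /setU1P[-> | /MA eA]; rewrite !inE ?eqxx ?eA ?orbT.
have M'_eq := symdiff_long MA uA l0r0M r1M P_eq.
have g_eq : profit w M P = w u r0 - w l0 r0 + w l0 r1.
  by rewrite /profit M'_eq (weight_long_aug MA uA l0r0M r1M) addrC addKr.
rewrite M'_eq; split; last exact: dual_inv_long.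
move=> e; rewrite !inE => /or3P[/eqP -> | /eqP -> | /andP[_ /MA eA]];
  by rewrite ?eqxx ?eA ?(MA _ l0r0M) ?orbT.
Qed.

Lemma alg_run_dual s A M y Mf : alg_run w 4 A M s Mf -> uniq s ->
  {in s, forall x, x \notin A} -> left_in A M -> dual_inv M y ->
  exists g : L -> rat, exists2 yf : R -> rat, dual_inv Mf yf &
    [/\ weight w Mf = weight w M + \sum_(x <- s) g x,
        forall r, y r <= yf r &
        forall x r, x \in s -> w x r - g x <= yf r].
Proof.
elim: s A M y => [|u s IH] A M y /=.
  by move=> -> _ _ _ yM; exists (fun=> 0), y; rewrite ?big_nil ?addr0.
move=> [P [bestP run]] /andP[us s_uniq] s_new MA yM.
have uA := s_new u (mem_head _ _).
have [MA' yM'] := best_path_step MA uA yM bestP.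
have s_new' : {in s, forall x, x \notin u |: A}.
  move=> x xs; rewrite in_setU1 negb_or s_new ?inE ?xs ?orbT // andbT.
  by apply: contraNneq us => <-.
have [g [yf yfMf [wMf le_yf le_g]]] := IH _ _ _ run s_uniq s_new' MA' yM'.
have raise_le r : (y r <= yf r) && (w u r - profit w M P <= yf r).
  by rewrite -ge_max; exact: le_yf.
have sum_s : \sum_(x <- s) (if x == u then profit w M P else g x) = \sum_(x <- s) g x.
  by apply: eq_big_seq => x xs; case: eqP => // xu; rewrite -xu xs in us.
exists (fun x => if x == u then profit w M P else g x), yf => //; split.
- by rewrite big_cons eqxx sum_s wMf /profit; lra.
- by move=> r; case/andP: (raise_le r).
- move=> x r; rewrite in_cons; case: eqP => [-> _ | _ /= xs]; last exact: le_g.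
  by case/andP: (raise_le r).
Qed.

Definition right_weight M (r : R) : rat := \sum_(e in M | e.2 == r) w e.1 e.2.

Lemma right_weight_ge0 M r : 0 <= right_weight M r.
Proof. by apply: sumr_ge0 => e _; exact: w_ge0. Qed.

Lemma sum_right_weight M : \sum_r right_weight M r = weight w M.
Proof. by rewrite /weight (partition_big snd predT). Qed.

Lemma dual_inv_le_right_weight M y r : dual_inv M y -> y r <= right_weight M r.
Proof.
case=> le_w le_0 _; have [/existsP [l lrM] | /existsPn rM] := boolP (covered M (inr r)).
  apply: le_trans (le_w _ _ lrM) _; rewrite /right_weight (bigD1 (l, r)) ?lrM ?eqxx //=.
  by rewrite lerDl sumr_ge0 // => e _; exact: w_ge0.
exact: le_trans (le_0 _ rM) (right_weight_ge0 M r).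
Qed.

Lemma left_perfect_weight_le M (a : L -> rat) (b : R -> rat) :
  left_perfect [set: L] M -> (forall l r, w l r <= a l + b r) -> (forall r, 0 <= b r) ->
  weight w M <= \sum_l a l + \sum_r b r.
Proof.
case=> M_matching _ M_cover le_ab b_ge0.
have fst_inj : {in M &, injective (@fst L R)}.
  by move=> e1 e2 e1M e2M E; apply: M_matching => //; left.
have snd_inj : {in M &, injective (@snd L R)}.
  by move=> e1 e2 e1M e2M E; apply: M_matching => //; right.
have sum_a : \sum_(e in M) a e.1 = \sum_l a l.
  rewrite -(big_imset _ fst_inj) /=; apply: eq_bigl => l.
  by apply/imsetP; have [r lrM] := M_cover l (in_setT l); exists (l, r).
have sum_b : \sum_(e in M) b e.2 <= \sum_r b r.
  rewrite -(big_imset _ snd_inj) /= [leRHS](bigID (mem (snd @: M))) /= lerDl.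
  exact: sumr_ge0.
apply: le_trans (_ : \sum_(e in M) (a e.1 + b e.2) <= _).
  by apply: ler_sum => -[l r] _; exact: le_ab.
by rewrite big_split -sum_a lerD2l.
Qed.

End Online.

Theorem theorem3 (L R : finType) (w : L -> R -> rat)
  (hw : forall l r, 0 <= w l r) (hLR : (#|L| <= #|R|)%N)
  (s : seq L) (hs_uniq : uniq s) (hs_all : forall l : L, l \in s)
  (Mf : {set L * R}) (hrun : alg_run w 4 set0 set0 s Mf)
  (Mopt : {set L * R}) (hopt : left_perfect [set: L] Mopt) :
  (1 / 2) * weight w Mopt <= weight w Mf.
Proof.
(* [hLR] only guarantees that [Mopt] exists. *)
have none_arrived : {in s, forall x, x \notin set0} by move=> x; rewrite inE.
have set0_left_in : left_in set0 (set0 : {set L * R}) by move=> e; rewrite inE.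
have [g [yf yfMf [wMf _ le_g]]] :=
  alg_run_dual hw hrun hs_uniq none_arrived set0_left_in (@dual_inv0 _ _ w).
have edge_cover l r : w l r <= g l + right_weight w Mf r.
  by have := le_g l r (hs_all l); have := dual_inv_le_right_weight hw r yfMf; lra.
have := left_perfect_weight_le hopt edge_cover (right_weight_ge0 hw Mf).
have sum_g : \sum_l g l = \sum_(x <- s) g x.
  by rewrite [RHS]big_uniq //; apply: eq_bigl => l; rewrite hs_all.
have weight0 : weight w (set0 : {set L * R}) = 0 by rewrite /weight big_set0.
rewrite sum_right_weight sum_g; lra.
Qed.
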